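(* Let $R$ be a unital commutative Hausdorff topological ring with dense group of units, $E\in\mathrm{TopSMod}_R$ and $\lambda\in\Lambda^\infty$. A subset $U\subset\underline E(\lambda)$ is open in the DeWitt topology if and only if $U=\underline E(\eta)(V)+\underline E(\lambda)^+$ for some open $V\subset E_0$; likewise $U\subset E\otimes\lambda$ is DeWitt-open if and only if $U=V\otimes1+E\otimes\lambda^+$ for some open $V\subset E$. The DeWitt topology on $\underline E(\lambda)$ is a $\lambda_0$-module topology, and the DeWitt topology on $E\otimes\lambda$ is a $\lambda$-module topology.
   Context: $\lambda^n=R[\theta_1,\dots,\theta_n]$ ($n\in\mathbb N$, $\lambda^0=R$) and $\lambda^\infty=R[\theta_i:i\in\mathbb N]$ are Grassmann algebras on odd generators ($\lambda^n=\bigoplus_IR\theta_I$ product topology; $\lambda^\infty$ direct limit topology). $\Lambda^\infty$: category with objects these algebras and morphisms even unital $R$-algebra morphisms. For $\lambda\in\Lambda^\infty$, $\varepsilon:\lambda\to R$ is the morphism killing all $\theta_i$, $\eta:R\to\lambda$ the unit map, $\lambda^+=\ker\varepsilon$. $\mathrm{TopSMod}_R$: Hausdorff graded topological $R$-modules $E=E_0\oplus E_1$. $E\otimes\lambda^N=\prod_{|I|\le N}E\theta_I$, $E\otimes\lambda^\infty=\varinjlim_NE\otimes\lambda^N$; $\underline E(\lambda)=(E\otimes\lambda)_0=E_0\otimes\lambda_0\oplus E_1\otimes\lambda_1$, $\underline E(\varphi)=(\mathrm{id}\otimes\varphi)|$, $\underline E(\lambda)^+=(E\otimes\lambda^+)_0$.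 The DeWitt topology on $\underline E(\lambda)$ (resp. $E\otimes\lambda$) is the coarsest topology for which $\underline E(\varepsilon):\underline E(\lambda)\to E_0$ (resp. $\mathrm{id}\otimes\varepsilon:E\otimes\lambda\to E$) is continuous. A $\lambda_0$-module topology is one making addition and scalar multiplication $\lambda_0\times\underline E(\lambda)\to\underline E(\lambda)$ continuous (with the given topology on $\lambda_0$). *)

From HB Require Import structures.
From mathcomp Require Import all_boot all_order all_algebra.
From mathcomp Require Import finmap.
From mathcomp Require Import all_classical all_reals topology.

Set Implicit Arguments.
Unset Strict Implicit.
Unset Printing Implicit Defensive.
Import Order.TTheory GRing.Theory.
Local Open Scope classical_set_scope.
Local Open Scope ring_scope.

HB.structure Definition TopZmod := {M of GRing.Zmodule M & Topological M}.
HB.structure Definition TopComRing := {R of GRing.ComPzRing R & Topological R}.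
HB.structure Definition TopLmod (R : pzRingType) := {M of GRing.Lmodule R M & Topological M}.



Definition topology_on (X : Type) (S : set X) (tau : set (set X)) : Prop :=
  [/\ (forall U, tau U -> U `<=` S),
      tau set0, tau S,
      (forall F : set (set X), F `<=` tau -> tau (\bigcup_(U in F) U))
    & (forall U V, tau U -> tau V -> tau (U `&` V))].

(* open sets of the coarsest topology on S for which f : S -> Y is continuous *)
Definition initial_open (X : Type) (Y : topologicalType) (S : set X) (f : X -> Y)
    (U : set X) : Prop :=
  forall tau : set (set X), topology_on S tau ->
    (forall V : set Y, open V -> tau (S `&` f @^-1` V)) -> tau U.

Definition subspace_open (X : Type) (T : set X) (tau : set (set X)) (U : set X) : Prop :=
  exists W, tau W /\ U = W `&` T.

(* a map f : SA x SB -> SC, jointly continuous for the product topology of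
   (SA, tauA) x (SB, tauB) and the topology tauC on SC *)
Definition cont2_on (A B C : Type) (SA : set A) (tauA : set (set A))
    (SB : set B) (tauB : set (set B)) (SC : set C) (tauC : set (set C))
    (f : A -> B -> C) : Prop :=
  (forall a b, SA a -> SB b -> SC (f a b)) /\
  (forall a b, SA a -> SB b -> forall W, tauC W -> W (f a b) ->
     exists UA UB, [/\ tauA UA, tauB UB, UA a, UB b &
       forall a' b', UA a' -> UB b' -> W (f a' b')]).

Definition topological_ring (R : TopComRing.type) : Prop :=
  [/\ continuous (fun p : R * R => p.1 + p.2),
      continuous (fun x : R => - x)
    & continuous (fun p : R * R => p.1 * p.2)].

Definition units_set (R : TopComRing.type) : set R := [set x | exists y, x * y = 1].

Definition topological_module (R : TopComRing.type) (M : TopLmod.type R) : Prop :=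
  continuous (fun p : M * M => p.1 + p.2) /\
  continuous (fun p : R * M => p.1 *: p.2).

(* objects: lambda^n (Fin n) and lambda^infty (Inf) *)
Inductive GrObj := Fin of nat | Inf.

(* I (a finite set of generator indices) indexes a monomial theta_I of the object *)
Definition idx_ok (o : GrObj) (I : {fset nat}) : Prop :=
  match o with Fin n => forall i, i \in I -> (i < n)%N | Inf => True end.

Definition even_idx (I : {fset nat}) : bool := ~~ odd #|` I|%fset.

(* sign of theta_I theta_J = sign * theta_(I u J), for disjoint I J *)
Definition gsign (R : TopComRing.type) (I J : {fset nat}) : R :=
  (-1) ^+ (\sum_(i <- enum_fset I) count (fun j => (j < i)%N) (enum_fset J))%N.

Section Grassmann.
Variables (R : TopComRing.type) (E0 E1 : TopLmod.type R).

(* elements of lambda^n / lambda^infty: coefficient families a = sum_I a_I theta_I *)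
Definition Lam := {fset nat} -> R.
(* elements of E (x) lambda, with E = E0 (+) E1 *)
Definition EL := {fset nat} -> E0 * E1.

Definition lam_set (o : GrObj) : set Lam :=
  [set a | (forall I, ~ idx_ok o I -> a I = 0) /\ finite_set [set I | a I != 0]].

Definition lam0_set (o : GrObj) : set Lam :=
  [set a | lam_set o a /\ forall I, ~~ even_idx I -> a I = 0].

(* product topology on lambda^n, direct limit topology on lambda^infty *)
Definition lam_open (o : GrObj) (U : set Lam) : Prop :=
  let fin_open n (U : set Lam) :=
    U `<=` lam_set (Fin n) /\
    forall a, U a -> exists V : {fset nat} -> set R,
      (forall I, idx_ok (Fin n) I -> open (V I) /\ V I (a I)) /\
      (forall b, lam_set (Fin n) b -> (forall I, idx_ok (Fin n) I -> V I (b I)) -> U b) in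
  match o with
  | Fin n => fin_open n U
  | Inf => U `<=` lam_set Inf /\ forall N, fin_open N (U `&` lam_set (Fin N))
  end.

Definition lam0_open (o : GrObj) : set (set Lam) := subspace_open (lam0_set o) (lam_open o).

Definition lam_mul (a b : Lam) : Lam :=
  fun K => \sum_(I <- enum_fset (fpowerset K)) gsign R I (K `\` I)%fset * a I * b (K `\` I)%fset.

Definition EL_set (o : GrObj) : set EL :=
  [set x | (forall I, ~ idx_ok o I -> x I = 0) /\ finite_set [set I | x I != 0]].

(* underline E (lambda) = (E (x) lambda)_0 *)
Definition El_set (o : GrObj) : set EL :=
  [set x | EL_set o x /\ forall I, if even_idx I then (x I).2 = 0 else (x I).1 = 0].

Definition EL_plus (o : GrObj) : set EL := [set x | EL_set o x /\ x fset0%fset = 0].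
Definition El_plus (o : GrObj) : set EL := [set x | El_set o x /\ x fset0%fset = 0].

Definition EL_add (x y : EL) : EL := fun I => x I + y I.

(* action of lambda on E (x) lambda: a . (e (x) b) = e (x) (a b) *)
Definition EL_act (a : Lam) (x : EL) : EL :=
  fun K => \sum_(I <- enum_fset (fpowerset K))
     (gsign R I (K `\` I)%fset * a I) *: x (K `\` I)%fset.

Definition EL_eps (x : EL) : E0 * E1 := x fset0.
Definition El_eps (x : EL) : E0 := (x fset0).1.

Definition EL_one (v : E0 * E1) : EL := fun I => if I == fset0 then v else 0.
Definition El_eta (v : E0) : EL := fun I => if I == fset0 then (v, 0) else 0.

Definition El_DeWitt (o : GrObj) : set (set EL) := initial_open (El_set o) El_eps.
Definition EL_DeWitt (o : GrObj) : set (set EL) := initial_open (EL_set o) EL_eps.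

End Grassmann.

(* The DeWitt topology is the initial topology of the body map [epsilon], so its
   open sets are the preimages [epsilon^-1 V] of open sets [V] of [E], and
   [epsilon^-1 V] is exactly [V (x) 1 + E (x) lambda^+].  Since [epsilon] turns
   addition into addition and the action of [a] into multiplication by the body
   [a_0] of [a], the continuity of the module operations of [E] (and of the map
   [a |-> a_0] on [lambda]) pulls back to the DeWitt topologies. *)

From HB Require Import structures.
From mathcomp Require Import all_boot all_order all_algebra.
From mathcomp Require Import finmap.
From mathcomp Require Import all_classical all_reals topology.
Set Implicit Arguments.
Unset Strict Implicit.
Unset Printing Implicit Defensive.
Local Open Scope classical_set_scope.
Local Open Scope ring_scope.
Import GRing.Theory.

Lemma continuous_fst (X Y : topologicalType) : continuous (@fst X Y).
Proof. by move=> [x y]; exact: cvg_fst. Qed.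

Lemma continuous_snd (X Y : topologicalType) : continuous (@snd X Y).
Proof. by move=> [x y]; exact: cvg_snd. Qed.

Lemma continuous_pair (X Y Z : topologicalType) (f : X -> Y) (g : X -> Z) :
  continuous f -> continuous g -> continuous (fun x => (f x, g x)).
Proof. by move=> cf cg x; apply: cvg_pair; [exact: cf|exact: cg]. Qed.

Lemma continuous_prod_op (A1 A2 B1 B2 C1 C2 : topologicalType)
    (f1 : A1 * B1 -> C1) (f2 : A2 * B2 -> C2) :
  continuous f1 -> continuous f2 ->
  continuous (fun p : (A1 * A2) * (B1 * B2) =>
                (f1 (p.1.1, p.2.1), f2 (p.1.2, p.2.2))).
Proof.
move=> cf1 cf2; apply: continuous_pair => p.
- apply: (@continuous_comp _ _ _ (fun q : (A1 * A2) * (B1 * B2) => (q.1.1, q.2.1)));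
    last exact: cf1.
  apply: continuous_pair => q.
  + by apply: (@continuous_comp _ _ _ fst fst); apply: continuous_fst.
  + by apply: (@continuous_comp _ _ _ snd fst);
      [apply: continuous_snd|apply: continuous_fst].
- apply: (@continuous_comp _ _ _ (fun q : (A1 * A2) * (B1 * B2) => (q.1.2, q.2.2)));
    last exact: cf2.
  apply: continuous_pair => q.
  + by apply: (@continuous_comp _ _ _ fst snd);
      [apply: continuous_fst|apply: continuous_snd].
  + by apply: (@continuous_comp _ _ _ snd snd); apply: continuous_snd.
Qed.

Lemma open_prod_box (X Y : topologicalType) (W : set (X * Y)) x y :
  open W -> W (x, y) ->
  exists P Q, [/\ open P, open Q, P x, Q y & P `*` Q `<=` W].
Proof.
rewrite openE => oW /oW [[P Q] /= []].
rewrite !nbhsE => -[P' [oP' P'x] sP'] [Q' [oQ' Q'y] sQ'] sPQ.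
exists P', Q'; split => // -[a b] [/= /sP' Pa /sQ' Qb]; exact: (sPQ (a, b)).
Qed.

Lemma continuous2_box (X Y Z : topologicalType) (h : X * Y -> Z) a b (W : set Z) :
  continuous h -> open W -> W (h (a, b)) ->
  exists P Q, [/\ open P, open Q, P a, Q b &
    forall a' b', P a' -> Q b' -> W (h (a', b'))].
Proof.
move=> /continuousP ch /ch oW Wh.
have [P [Q [oP oQ Pa Qb PQ]]] := open_prod_box oW Wh.
by exists P, Q; split => // a' b' Pa' Qb'; apply: (PQ (a', b')).
Qed.

Lemma initial_openP (X : Type) (Y : topologicalType) (S : set X) (f : X -> Y)
    (U : set X) :
  initial_open S f U <-> exists V, open V /\ U = S `&` f @^-1` V.
Proof.
split; last by move=> [V [oV ->]] tau _; apply.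
move/(_ (fun U => exists V, open V /\ U = S `&` f @^-1` V)); apply;
  last by move=> V oV; exists V.
split.
- by move=> _ [V [_ ->]] x [].
- by exists set0; rewrite preimage_set0 setI0; split; [exact: open0|].
- by exists setT; rewrite preimage_setT setIT; split; [exact: openT|].
- move=> F HF.
  exists (\bigcup_(V in [set V | open V /\ F (S `&` f @^-1` V)]) V); split.
    by apply: bigcup_open => V [].
  apply/seteqP; split.
    move=> x [U0 FU0 U0x]; have [V [oV EU0]] := HF _ FU0.
    move: U0x FU0; rewrite EU0 => -[Sx Vx] FV.
    by split => //; exists V.
  by move=> x [Sx [V [oV FV] Vx]]; exists (S `&` f @^-1` V).
- move=> _ _ [V1 [o1 ->]] [V2 [o2 ->]]; exists (V1 `&` V2); split.
    exact: openI.
  by rewrite preimage_setI setIACA setIid.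
Qed.

Lemma cont2_on_initial (A B C : Type) (X Y Z : topologicalType)
    (SA : set A) (tauA : set (set A)) (fA : A -> X)
    (SB : set B) (fB : B -> Y) (SC : set C) (fC : C -> Z)
    (g : A -> B -> C) (h : X * Y -> Z) :
  (forall V, open V -> tauA (SA `&` fA @^-1` V)) -> continuous h ->
  (forall a b, SA a -> SB b -> SC (g a b) /\ fC (g a b) = h (fA a, fB b)) ->
  cont2_on SA tauA SB (initial_open SB fB) SC (initial_open SC fC) g.
Proof.
move=> tauA_open ch hg; split=> [a b Sa Sb|a b Sa Sb W]; first by case: (hg a b Sa Sb).
rewrite initial_openP => -[V [oV ->]] [_].
rewrite /= (hg a b Sa Sb).2 => Vh.
have [P [Q [oP oQ Pa Qb PQ]]] := continuous2_box ch oV Vh.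
exists (SA `&` fA @^-1` P), (SB `&` fB @^-1` Q); split => //.
- exact: tauA_open.
- by apply/initial_openP; exists Q.
move=> a' b' [Sa' Pa'] [Sb' Qb']; have [SCg ->] := hg a' b' Sa' Sb'.
by split => //; apply: PQ.
Qed.

Section ProductModule.
Variables (R : TopComRing.type) (E0 E1 : TopLmod.type R).
Hypotheses (tm0 : topological_module E0) (tm1 : topological_module E1).

Lemma continuous_add_prod : continuous (fun p : (E0 * E1) * (E0 * E1) => p.1 + p.2).
Proof. exact: (continuous_prod_op tm0.1 tm1.1). Qed.

Lemma continuous_scale_prod : continuous (fun p : R * (E0 * E1) => p.1 *: p.2).
Proof.
move=> p; apply: (@continuous_comp _ _ _ (fun q : R * (E0 * E1) => ((q.1, q.1), q.2))
  (fun q => (q.1.1 *: q.2.1, q.1.2 *: q.2.2))).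
- by apply: continuous_pair; [apply: continuous_pair; apply: continuous_fst|
                             apply: continuous_snd].
- exact: (continuous_prod_op tm0.2 tm1.2).
Qed.

End ProductModule.

Lemma idx_ok_fsetU o (I J : {fset nat}) :
  idx_ok o I -> idx_ok o J -> idx_ok o (I `|` J)%fset.
Proof.
by case: o => //= n hI hJ i; rewrite in_fsetU => /orP[/hI|/hJ].
Qed.

Lemma idx_ok_fset0 o : idx_ok o fset0.
Proof. by case: o => //= n i; rewrite in_fset0. Qed.

Lemma fsetUDK (T : choiceType) (I K : {fset T}) :
  (I `<=` K)%fset -> (I `|` (K `\` I))%fset = K.
Proof. by move=> sIK; rewrite fsetUDl fsetDv fsetD0; apply/fsetUidPr. Qed.

Lemma even_idxD (I K : {fset nat}) : (I `<=` K)%fset -> even_idx I ->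
  even_idx (K `\` I)%fset = even_idx K.
Proof.
move=> sIK; rewrite /even_idx cardfsDS // oddB ?fsubset_leq_card //.
by move/negbTE => ->; rewrite addbF.
Qed.

Section Grassmann.
Variables (R : TopComRing.type) (E0 E1 : TopLmod.type R).
Local Notation EL := (EL E0 E1).
Implicit Types (o : GrObj) (x y : EL) (a : Lam R).

Lemma EL_act_ind (P : E0 * E1 -> Prop) a x K : P 0 ->
  (forall u v, P u -> P v -> P (u + v)) ->
  (forall c u, P u -> P (c *: u)) ->
  (forall I, (I `<=` K)%fset -> a I != 0 -> P (x (K `\` I)%fset)) ->
  P (EL_act a x K).
Proof.
move=> P0 PD PZ Px; rewrite /EL_act big_seq; apply: big_ind => // I.
rewrite /= fpowersetE => sIK.
by case: (eqVneq (a I) 0) => [->|aI]; [rewrite mulr0 scale0r|apply/PZ/Px].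
Qed.

Lemma EL_act_neq0 a x K : EL_act a x K != 0 ->
  exists2 I, (I `<=` K)%fset & a I != 0 /\ x (K `\` I)%fset != 0.
Proof.
apply: contra_neqP => noI; apply: (EL_act_ind (P := eq^~ 0)) => //.
- by move=> u v -> ->; rewrite addr0.
- by move=> c u ->; rewrite scaler0.
- by move=> I sIK aI; apply: contra_notP noI => /eqP xI; exists I.
Qed.

Lemma EL_eps_act a x : EL_eps (EL_act a x) = a fset0 *: EL_eps x.
Proof.
rewrite /EL_eps /EL_act.
have -> : fpowerset (@fset0 nat) = [fset fset0]%fset.
  by apply/fsetP => B; rewrite fpowersetE fsubset0 inE.
by rewrite big_seq_fset1 /= fsetD0 /gsign big_seq_fset0 expr0 mul1r.
Qed.

Lemma EL_set_add o x y : EL_set o x -> EL_set o y -> EL_set o (EL_add x y).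
Proof.
move=> [zx fx] [zy fy]; split=> [I nI|]; first by rewrite /EL_add zx // zy // addr0.
have supp : [set I | EL_add x y I != 0] `<=` [set I | x I != 0] `|` [set I | y I != 0].
  move=> I /=; apply: contra_neqP => /not_orP[/negP/negbNE/eqP xI /negP/negbNE/eqP yI].
  by rewrite /EL_add xI yI addr0.
by apply: sub_finite_set supp _; rewrite finite_setU.
Qed.

Lemma El_set_add o x y : El_set o x -> El_set o y -> El_set o (EL_add x y).
Proof.
move=> [sx px] [sy py]; split=> [|I]; first exact: EL_set_add.
by have := px I; have := py I; rewrite /EL_add; case: ifP => _ /= -> ->; rewrite addr0.
Qed.

Lemma EL_set_act o a x : lam_set o a -> EL_set o x -> EL_set o (EL_act a x).
Proof.
move=> [za fa] [zx fx]; split=> [K nK|].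
  apply/eqP; apply: contra_notT nK => /EL_act_neq0 [I sIK [aI xI]].
  rewrite -(fsetUDK sIK); apply: idx_ok_fsetU.
    exact: contra_notP (za I) (elimN eqP aI).
  exact: contra_notP (zx _) (elimN eqP xI).
apply: sub_finite_set (finite_image2 fsetU fa fx).
move=> K /= /EL_act_neq0 [I sIK [aI xI]].
by exists I => //; exists (K `\` I)%fset => //; rewrite fsetUDK.
Qed.

Lemma El_set_act o a x : lam0_set o a -> El_set o x -> El_set o (EL_act a x).
Proof.
move=> [la pa] [sx px]; split=> [|K]; first exact: EL_set_act.
apply: (EL_act_ind (P := fun p => if even_idx K then p.2 = 0 else p.1 = 0)).
- by case: ifP.
- by move=> u v /=; case: ifP => _ -> ->; rewrite addr0.
- by move=> c u /=; case: ifP => _ ->; rewrite scaler0.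
- move=> I sIK aI; have := px (K `\` I)%fset; rewrite even_idxD //.
  by apply: contraNT aI => /pa ->.
Qed.

Lemma EL_set_one o (v : E0 * E1) : EL_set o (EL_one v).
Proof.
split=> [I|]; rewrite /EL_one.
  by case: (I =P fset0) => // -> /(_ (idx_ok_fset0 o)).
apply: sub_finite_set (finite_set1 (@fset0 nat)) => I /=.
by case: (I =P fset0) => // _; rewrite eqxx.
Qed.

Lemma El_set_eta o (v : E0) : El_set o (El_eta E1 v).
Proof.
split=> [|I]; rewrite /El_eta; last by case: (I =P fset0) => [->|_] //; case: ifP.
split=> [I|]; first by case: (I =P fset0) => // -> /(_ (idx_ok_fset0 o)).
apply: sub_finite_set (finite_set1 (@fset0 nat)) => I /=.
by case: (I =P fset0) => // _; rewrite eqxx.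
Qed.

Lemma EL_eps_preimageE o (V : set (E0 * E1)) : EL_set o `&` @EL_eps R E0 E1 @^-1` V =
  [set x | exists v, V v /\ exists y, EL_plus o y /\ x = EL_add (EL_one v) y].
Proof.
apply/seteqP; split=> [x [[zx fx] Vx]|_ [v [Vv [y [[sy y0] ->]]]]]; last first.
  by split; [apply: EL_set_add sy; exact: EL_set_one|rewrite /= /EL_eps /EL_add y0 addr0].
exists (x fset0); split => //.
exists (fun I => if I == fset0 then 0 else x I); split; last first.
  by apply: funext => I; rewrite /EL_add /EL_one; case: (I =P fset0) => [->|_];
    rewrite ?addr0 ?add0r.
split; last by rewrite eqxx.
split=> [I nI|]; first by case: (I =P fset0) => // _; exact: zx.
by apply: sub_finite_set fx => I /=; case: (I =P fset0) => // _; rewrite eqxx.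
Qed.

Lemma El_eps_preimageE o (V : set E0) : El_set o `&` @El_eps R E0 E1 @^-1` V =
  [set x | exists v, V v /\ exists y, El_plus o y /\ x = EL_add (El_eta E1 v) y].
Proof.
apply/seteqP; split=> [x [[[zx fx] px] Vx]|_ [v [Vv [y [[sy y0] ->]]]]]; last first.
  by split; [apply: El_set_add sy; exact: El_set_eta|rewrite /= /El_eps /EL_add y0 addr0].
exists (x fset0).1; split => //.
exists (fun I => if I == fset0 then 0 else x I); split; last first.
  apply: funext => I; rewrite /EL_add /El_eta; case: (I =P fset0) => [->|_];
    rewrite ?addr0 ?add0r //.
  by have /= := px fset0; case: (x fset0) => ? ? /= ->.
split; last by rewrite eqxx.
split=> [|I]; last by case: (I =P fset0) => _; [case: ifP|exact: px].
split=> [I nI|]; first by case: (I =P fset0) => // _; exact: zx.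
by apply: sub_finite_set fx => I /=; case: (I =P fset0) => // _; rewrite eqxx.
Qed.

Lemma El_DeWittP o (U : set EL) : El_DeWitt o U <->
  exists V : set E0, open V /\
    U = [set x | exists v, V v /\ exists y, El_plus o y /\ x = EL_add (El_eta E1 v) y].
Proof.
rewrite /El_DeWitt initial_openP.
by split=> -[V [oV ->]]; exists V; rewrite El_eps_preimageE.
Qed.

Lemma EL_DeWittP o (U : set EL) : EL_DeWitt o U <->
  exists V : set (E0 * E1), open V /\
    U = [set x | exists v, V v /\ exists y, EL_plus o y /\ x = EL_add (EL_one v) y].
Proof.
rewrite /EL_DeWitt initial_openP.
by split=> -[V [oV ->]]; exists V; rewrite EL_eps_preimageE.
Qed.
End Grassmann.

Lemma lam_open_fset0_preimage (R : TopComRing.type) o (A : set R) : open A ->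
  lam_open o (lam_set o `&` (fun a : Lam R => a fset0) @^-1` A).
Proof.
move=> oA; pose V (I : {fset nat}) : set R := if I == fset0 then A else setT.
have V_nbhs (a : Lam R) (I : {fset nat}) : A (a fset0) -> open (V I) /\ V I (a I).
  by rewrite /V; case: (I =P fset0) => [->|_] //; split=> //; exact: openT.
have V_fset0 (b : Lam R) : V fset0 (b fset0) -> A (b fset0) by rewrite /V eqxx.
case: o => [n|] /=; split=> [_ []//|].
- move=> a [la Aa]; exists V; split=> [I _|b lb Vb]; first exact: V_nbhs.
  by split=> //; exact: V_fset0 (Vb fset0 (idx_ok_fset0 (Fin n))).
- move=> N; split=> [_ [] []//|a [[la Aa] lN]]; exists V.
  split=> [I _|b lb Vb]; first exact: V_nbhs.
  split=> //; split; last exact: V_fset0 (Vb fset0 (idx_ok_fset0 (Fin N))).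
  by split=> [I nI|]; [case: nI|exact: lb.2].
Qed.

Lemma lam0_open_fset0_preimage (R : TopComRing.type) o (A : set R) : open A ->
  lam0_open o (lam0_set o `&` (fun a : Lam R => a fset0) @^-1` A).
Proof.
move=> /(lam_open_fset0_preimage o) oA; exists (lam_set o `&` (fun a => a fset0) @^-1` A).
split=> //; apply/seteqP; split=> [a [l0 Aa]|a [[_ Aa] l0]] //.
by split=> //; split=> //; exact: l0.1.
Qed.

Section DeWittContinuity.
Variables (R : TopComRing.type) (E0 E1 : TopLmod.type R) (o : GrObj).
Hypotheses (tm0 : topological_module E0) (tm1 : topological_module E1).

Lemma El_add_continuous : cont2_on (El_set o) (El_DeWitt o) (El_set o) (El_DeWitt o)
  (El_set o) (El_DeWitt o) (@EL_add R E0 E1).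
Proof.
apply: (cont2_on_initial (h := fun p : E0 * E0 => p.1 + p.2)) tm0.1 _.
  by move=> V oV; apply/initial_openP; exists V.
by move=> x y Sx Sy; split; [exact: El_set_add|].
Qed.

Lemma El_act_continuous : cont2_on (lam0_set o) (lam0_open o) (El_set o) (El_DeWitt o)
  (El_set o) (El_DeWitt o) (@EL_act R E0 E1).
Proof.
apply: (cont2_on_initial (h := fun p : R * E0 => p.1 *: p.2)) tm0.2 _.
  exact: lam0_open_fset0_preimage.
move=> a x Sa Sx; split; first exact: El_set_act.
by rewrite /El_eps -/(EL_eps _) EL_eps_act.
Qed.

Lemma EL_add_continuous : cont2_on (EL_set o) (EL_DeWitt o) (EL_set o) (EL_DeWitt o)
  (EL_set o) (EL_DeWitt o) (@EL_add R E0 E1).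
Proof.
apply: (cont2_on_initial _ (continuous_add_prod tm0 tm1)).
  by move=> V oV; apply/initial_openP; exists V.
by move=> x y Sx Sy; split; [exact: EL_set_add|].
Qed.

Lemma EL_act_continuous : cont2_on (lam_set o) (lam_open o) (EL_set o) (EL_DeWitt o)
  (EL_set o) (EL_DeWitt o) (@EL_act R E0 E1).
Proof.
apply: (cont2_on_initial _ (continuous_scale_prod tm0 tm1)).
  exact: lam_open_fset0_preimage.
by move=> a x Sa Sx; split; [exact: EL_set_act|exact: EL_eps_act].
Qed.

End DeWittContinuity.

Theorem lemma2p5 (R : TopComRing.type) (E0 E1 : TopLmod.type R) (o : GrObj) :
  topological_ring R -> hausdorff_space R -> dense (@units_set R) ->
  topological_module E0 -> topological_module E1 ->
  hausdorff_space E0 -> hausdorff_space E1 ->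
  [/\ (forall U : set (EL E0 E1), U `<=` El_set o ->
         (El_DeWitt o U <->
          exists V : set E0, open V /\
            U = [set x | exists v, V v /\
                   exists y, El_plus o y /\ x = EL_add (El_eta E1 v) y])),
      (forall U : set (EL E0 E1), U `<=` EL_set o ->
         (EL_DeWitt o U <->
          exists V : set (E0 * E1), open V /\
            U = [set x | exists v, V v /\
                   exists y, EL_plus o y /\ x = EL_add (EL_one v) y])),
      cont2_on (El_set o) (El_DeWitt o) (El_set o) (El_DeWitt o)
               (El_set o) (El_DeWitt o) (@EL_add R E0 E1) /\
      cont2_on (lam0_set o) (lam0_open o) (El_set o) (El_DeWitt o)
               (El_set o) (El_DeWitt o) (@EL_act R E0 E1)
    & cont2_on (EL_set o) (EL_DeWitt o) (EL_set o) (EL_DeWitt o)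
               (EL_set o) (EL_DeWitt o) (@EL_add R E0 E1) /\
      cont2_on (lam_set o) (lam_open o) (EL_set o) (EL_DeWitt o)
               (EL_set o) (EL_DeWitt o) (@EL_act R E0 E1)].
Proof.
move=> _ _ _ tm0 tm1 _ _; split=> [U _|U _||].
- exact: El_DeWittP.
- exact: EL_DeWittP.
- by split; [exact: El_add_continuous|exact: El_act_continuous].
- by split; [exact: EL_add_continuous|exact: EL_act_continuous].
Qed.
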